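(* Let $n\ge1$, let $\equiv$ be a lattice congruence of the weak order on $S_n$, and let $X$ be an equivalence class with minimum $\pi$ and maximum $\rho$. Then $p(\pi)$ and $p(\rho)$ are the minimum and maximum, respectively, of the equivalence class $p(X)=\{p(\sigma):\sigma\in X\}$ of the restriction $\equiv^*$.
   Context: $S_n$ is the set of permutations of $[n]$ with the weak order (inclusion of inversion sets), which is a lattice. A lattice congruence is an equivalence relation compatible with joins and meets; each of its classes is an interval of the weak order and so has a minimum and a maximum. $p(\sigma)\in S_{n-1}$ is obtained from $\sigma\in S_n$ by deleting $n$. The restriction is defined by $\alpha\equiv^*\beta$ iff $\alpha n\equiv\beta n$ (i.e., $n$ appended at the end); it is a lattice congruence on $S_{n-1}$, and $p(X)$ is one of its classes. *)

From mathcomp Require Import all_boot all_order all_fingroup.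
Set Implicit Arguments. Unset Strict Implicit. Unset Printing Implicit Defensive.

(* A permutation s : 'S_n of [n] (encoded as {0,..,n-1}) is read in one-line
   notation: position i carries the value s i. *)

Definition inv_set n (s : 'S_n) : {set 'I_n * 'I_n} :=
  [set ab : 'I_n * 'I_n | (ab.1 < ab.2)%N && ((s^-1)%g ab.2 < (s^-1)%g ab.1)%N].

Definition weak_le n (s t : 'S_n) : bool := inv_set s \subset inv_set t.

Definition is_weak_join n (x y z : 'S_n) : Prop :=
  weak_le x z /\ weak_le y z /\ forall w, weak_le x w -> weak_le y w -> weak_le z w.
Definition is_weak_meet n (x y z : 'S_n) : Prop :=
  weak_le z x /\ weak_le z y /\ forall w, weak_le w x -> weak_le w y -> weak_le w z.

Definition lattice_congruence n (R : 'S_n -> 'S_n -> Prop) : Prop :=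
  [/\ (forall x, R x x),
      (forall x y, R x y -> R y x),
      (forall x y z, R x y -> R y z -> R x z),
      (forall x x' y j j', R x x' -> is_weak_join x y j -> is_weak_join x' y j' -> R j j')
    & (forall x x' y m m', R x x' -> is_weak_meet x y m -> is_weak_meet x' y m' -> R m m')].

Definition is_weak_min n (X : {set 'S_n}) (m : 'S_n) : Prop :=
  m \in X /\ forall s, s \in X -> weak_le m s.
Definition is_weak_max n (X : {set 'S_n}) (m : 'S_n) : Prop :=
  m \in X /\ forall s, s \in X -> weak_le s m.

(* p : S_{n+1} -> S_n, deleting the largest value (ord_max, i.e. "n+1")
   from the one-line word. *)
Definition delmax_fun n (s : 'S_n.+1) (i : 'I_n) : 'I_n :=
  odflt i (unlift ord_max (s (lift ((s^-1)%g ord_max) i))).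

Lemma delmax_fun_spec n (s : 'S_n.+1) (i : 'I_n) :
  lift ord_max (delmax_fun s i) = s (lift ((s^-1)%g ord_max) i).
Proof.
rewrite /delmax_fun; case: unliftP => [j -> //|] /= E.
have : lift ((s^-1)%g ord_max) i = (s^-1)%g ord_max by apply: (@perm_inj _ s); rewrite E permKV.
by move/eqP; rewrite eq_sym (negbTE (neq_lift _ _)).
Qed.

Lemma delmax_inj n (s : 'S_n.+1) : injective (delmax_fun s).
Proof.
move=> i j E; have := congr1 (lift ord_max) E.
by rewrite !delmax_fun_spec => /perm_inj /lift_inj.
Qed.

Definition delmax n (s : 'S_n.+1) : 'S_n := perm (@delmax_inj n s).

(* Appending the largest value at the end of the word: alpha |-> alpha n. *)
Definition append_max n (a : 'S_n) : 'S_n.+1 := lift_perm ord_max ord_max a.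

Definition restriction n (R : 'S_n.+1 -> 'S_n.+1 -> Prop) (a b : 'S_n) : Prop :=
  R (append_max a) (append_max b).

From mathcomp Require Import all_boot all_order all_fingroup.

(* Deleting the largest value keeps the relative order of all other values, so
   the inversions of p(s) are exactly the inversions of s between values below
   the maximum.  Hence p is monotone for the weak order, and a monotone map
   sends the minimum (maximum) of X to the minimum (maximum) of its image. *)

Lemma ltn_lift n (h : 'I_n.+1) (i j : 'I_n) :
  (lift h i < lift h j)%N = (i < j)%N.
Proof. by rewrite /= !ltnNge leq_bump2. Qed.

Lemma permV_delmax n (s : 'S_n.+1) (b : 'I_n) :
  (s^-1)%g (lift ord_max b) = lift ((s^-1)%g ord_max) ((delmax s)^-1 b)%g.
Proof.
have delmaxKV : delmax_fun s ((delmax s)^-1 b)%g = b.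
  by have := permKV (delmax s) b; rewrite /delmax permE.
by rewrite -{1}delmaxKV delmax_fun_spec permK.
Qed.

Lemma inv_set_delmax n (s : 'S_n.+1) (a b : 'I_n) :
  ((a, b) \in inv_set (delmax s)) =
  ((lift ord_max a, lift ord_max b) \in inv_set s).
Proof. by rewrite !inE /= !permV_delmax !ltn_lift /bump !(leqNgt n) !ltn_ord. Qed.

Lemma weak_le_delmax n (s t : 'S_n.+1) :
  weak_le s t -> weak_le (delmax s) (delmax t).
Proof.
move=> /subsetP le_st; apply/subsetP => -[a b].
by rewrite !inv_set_delmax; apply: le_st.
Qed.

Section MonotoneImage.

Variables (m n : nat) (f : 'S_m -> 'S_n).
Hypothesis f_mono : forall s t, weak_le s t -> weak_le (f s) (f t).

Lemma weak_min_imset (X : {set 'S_m}) (s : 'S_m) :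
  is_weak_min X s -> is_weak_min (f @: X) (f s).
Proof.
move=> [sX s_min]; split; first exact: imset_f.
by move=> _ /imsetP [t tX ->]; apply/f_mono/s_min.
Qed.

Lemma weak_max_imset (X : {set 'S_m}) (s : 'S_m) :
  is_weak_max X s -> is_weak_max (f @: X) (f s).
Proof.
move=> [sX s_max]; split; first exact: imset_f.
by move=> _ /imsetP [t tX ->]; apply/f_mono/s_max.
Qed.

End MonotoneImage.

Theorem mainTheorem6 (n : nat) (R : 'S_n.+1 -> 'S_n.+1 -> Prop)
  (X : {set 'S_n.+1}) (pi rho : 'S_n.+1) :
  lattice_congruence R ->
  (exists s, forall t, t \in X <-> R s t) ->
  is_weak_min X pi -> is_weak_max X rho ->
  is_weak_min [set delmax s | s in X] (delmax pi) /\
  is_weak_max [set delmax s | s in X] (delmax rho).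
Proof.
move=> _ _ pi_min rho_max; split.
- exact: weak_min_imset (@weak_le_delmax n) _ _ pi_min.
- exact: weak_max_imset (@weak_le_delmax n) _ _ rho_max.
Qed.
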